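(* Let $p(0)\in\mathcal M_1^+$ be such that all coefficients $a(p(0))_k$, $k\in\mathbb N_0$, are finite, let $p(t+1)=\mathcal R_1(p(t))$ for $t\in\mathbb N_0$, and put $a_k(t)=a(p(t))_k$ and $\alpha=a_1(0)$. Then $\lim_{t\to\infty}a_k(t)=\alpha^k$ for all $k\ge0$.
   Context: $\mathcal M_1^+$ is the set of probability measures on $\mathbb N_0$, identified with nonnegative sequences summing to $1$. $\mathcal R_1(p)_i=\sum_{k,\ell\ge0,\ k+\ell\ge i}\frac{1+\min\{k,\ell,i,k+\ell-i\}}{(k+1)(\ell+1)}p_kp_\ell$. For $p\in\mathcal M_1^+$, $a(p)_k=\frac{1}{k+1}\sum_{\ell\ge k}\binom{\ell}{k}p_\ell\in[0,\infty]$ (so $a(p)_0=1$ and $a(p)_1=\frac12\sum_\ell \ell p_\ell$). *)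

From mathcomp Require Import all_boot all_order all_algebra.
From mathcomp Require Import all_classical all_reals all_analysis.
Set Implicit Arguments. Unset Strict Implicit. Unset Printing Implicit Defensive.
Import Order.TTheory GRing.Theory Num.Theory.
Local Open Scope ring_scope.
Local Open Scope ereal_scope.

Section Defs.
Variable R : realType.

Definition is_prob (p : nat -> R) : Prop :=
  (forall k, (0 <= p k)%R) /\ \sum_(k <oo) (p k)%:E = 1.

(* coefficient of p_k p_l in R_1(p)_i (zero unless k + l >= i) *)
Definition R1coef (i k l : nat) : R :=
  if (i <= k + l)%N then
    ((1 + (minn (minn k l) (minn i (k + l - i)))%:R) /
     ((k.+1)%:R * (l.+1)%:R))%R
  else 0%R.

Definition R1e (p : nat -> R) (i : nat) : \bar R :=
  \sum_(k <oo) \sum_(l <oo) (R1coef i k l * p k * p l)%:E.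

(* R_1(p), a real sequence; finite whenever p is in M_1^+ *)
Definition R1 (p : nat -> R) : nat -> R := fun i => fine (R1e p i).

Definition acoef (p : nat -> R) (k : nat) : \bar R :=
  ((k.+1)%:R^-1)%:E * \sum_(k <= l <oo) (('C(l, k))%:R * p l)%:E.

End Defs.

From mathcomp Require Import all_boot all_order all_algebra.
From mathcomp Require Import all_classical all_reals all_analysis.
From mathcomp Require Import zify ring lra.
Import Order.TTheory GRing.Theory Num.Theory.
Import numFieldNormedType.Exports.
Set Implicit Arguments. Unset Strict Implicit. Unset Printing Implicit Defensive.

(* Since a(p)_j = sum_K binom(K, j)/(j + 1) p_K, the coefficient of p_K p_L in
   a(R_1 p)_k is sum_i binom(i, k)/(k + 1) times the coefficient of p_K p_L in
   R_1(p)_i.  The numerator 1 + min{K, L, i, K + L - i} counts the splittings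
   i = u + v with u <= K, v <= L, so Vandermonde's identity and the diagonal
   sums of binomials turn that coefficient into
   1/(k + 1) sum_j binom(K, j)/(j + 1) binom(L, k - j)/(k - j + 1).  Hence
   a_k(t + 1) = 1/(k + 1) sum_(j <= k) a_j(t) a_(k-j)(t): a_0 = 1 and a_1 = alpha
   are invariant, and for k >= 2 the terms j = 0 and j = k give the contraction
   2/(k + 1) a_k(t) while the others converge to alpha^k by induction on k. *)

Lemma count_splittings K L i :
  \sum_(u < K.+1) ((u <= i) && (i - u <= L) : nat) =
  if i <= K + L then (minn (minn K L) (minn i (K + L - i))).+1 else 0.
Proof.
elim: K => [|K IH]; first by rewrite big_ord1 /=; case: ifP => h; lia.
rewrite big_ord_recr /= IH.
by case: (leqP K.+1 i) => a; case: (leqP (i - K.+1) L) => b /=;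
  case: ifP => h1; case: ifP => h2; lia.
Qed.

Lemma sum_window_indicator n u L (f : nat -> nat) : u + L < n ->
  \sum_(i < n) ((u <= i) && (i - u <= L)) * f i = \sum_(v < L.+1) f (u + v).
Proof.
move=> uLn.
rewrite -(big_mkord xpredT (fun i => ((u <= i) && (i - u <= L)) * f i)).
rewrite (@big_cat_nat _ _ _ u 0 n) //=; last by lia.
rewrite (@big_cat_nat _ _ _ (u + L.+1) u n) //=; [|lia|lia].
rewrite big1_seq ?add0n => [|i /andP[_]]; last first.
  rewrite mem_index_iota => /andP[_ iu].
  by have -> : (u <= i) = false by lia.
rewrite [X in _ + X]big1_seq ?addn0 => [|i /andP[_]]; last first.
  rewrite mem_index_iota => /andP[ui _]; have -> : (i - u <= L) = false by lia.
  by rewrite andbF.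
rewrite -{1}(add0n u) big_addn addKn big_mkord; apply: eq_bigr => v _.
have -> : (u <= v + u) && (v + u - u <= L) by rewrite leq_addl addnK -ltnS ltn_ord.
by rewrite mul1n addnC.
Qed.

Lemma sum_binomial_diag K j : \sum_(u < K.+1) 'C(u, j) = 'C(K.+1, j.+1).
Proof.
elim: K => [|K IH]; first by rewrite big_ord1 bin0n; case: j.
by rewrite big_ord_recr /= IH [in RHS]binS.
Qed.

Lemma sum_binomial_splittings K L k :
  \sum_(i < K + L + 1) 'C(i, k) * (minn (minn K L) (minn i (K + L - i))).+1 =
  \sum_(j < k.+1) 'C(K.+1, j.+1) * 'C(L.+1, (k - j).+1).
Proof.
transitivity (\sum_(i < K + L + 1) \sum_(u < K.+1)
                 ((u <= i) && (i - u <= L)) * 'C(i, k)).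
  apply: eq_bigr => i _; rewrite -big_distrl /= count_splittings.
  have -> : i <= K + L by have := ltn_ord i; lia.
  by rewrite mulnC.
rewrite exchange_big /=.
transitivity (\sum_(u < K.+1) \sum_(v < L.+1) \sum_(j < k.+1)
                 'C(u, j) * 'C(v, k - j)).
  apply: eq_bigr => u _.
  rewrite (@sum_window_indicator _ u L (fun i => 'C(i, k))); last first.
    by have := ltn_ord u; lia.
  by apply: eq_bigr => v _; rewrite binomial.Vandermonde.
transitivity (\sum_(j < k.+1) \sum_(u < K.+1) \sum_(v < L.+1)
                 'C(u, j) * 'C(v, k - j)).
  by under eq_bigr => u _ do rewrite exchange_big; rewrite exchange_big.
apply: eq_bigr => j _.
rewrite -!sum_binomial_diag big_distrl; apply: eq_bigr => u _.
by rewrite big_distrr.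
Qed.

Local Open Scope ring_scope.

Section Weights.
Variable R : realType.

Definition acoef_weight (j K : nat) : R := 'C(K, j)%:R / j.+1%:R.

Lemma acoef_weight_ge0 j K : 0 <= acoef_weight j K.
Proof. by rewrite divr_ge0. Qed.

Lemma acoef_weight0 K : acoef_weight 0 K = 1.
Proof. by rewrite /acoef_weight bin0 divr1. Qed.

Lemma acoef_weightE j K : acoef_weight j K = 'C(K.+1, j.+1)%:R / K.+1%:R.
Proof.
apply/eqP; rewrite eqr_div ?pnatr_eq0 // -!natrM; apply/eqP; congr _%:R.
by rewrite mulnC (mul_bin_diag K.+1 j) mulnC.
Qed.

Lemma R1coef_ge0 i K L : 0 <= R1coef R i K L.
Proof. by rewrite /R1coef; case: ifP => // _; rewrite divr_ge0 // addr_ge0. Qed.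

Lemma sum_acoef_weight_R1coef K L k :
  \sum_(i < K + L + 1) acoef_weight k i * R1coef R i K L =
  k.+1%:R^-1 * \sum_(j < k.+1) acoef_weight j K * acoef_weight (k - j) L.
Proof.
have nz n : n.+1%:R != 0 :> R by rewrite pnatr_eq0.
pose D : R := k.+1%:R * (K.+1%:R * L.+1%:R).
transitivity ((\sum_(i < K + L + 1)
    'C(i, k) * (minn (minn K L) (minn i (K + L - i))).+1)%N%:R / D).
  rewrite natr_sum mulr_suml; apply: eq_bigr => i _.
  rewrite /acoef_weight /R1coef.
  have -> : (i <= K + L)%N by have := ltn_ord i; lia.
  by rewrite nat1r natrM /D; field; rewrite !nat1r !nz.
rewrite sum_binomial_splittings natr_sum mulr_suml mulr_sumr.
apply: eq_bigr => j _; rewrite !acoef_weightE natrM /D.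
by field; rewrite !nat1r !nz.
Qed.

End Weights.

Section Series.
Variable R : realType.
Local Open Scope ereal_scope.

Lemma nneseries_finite_support (f : nat -> R) N :
  (forall i, (0 <= f i)%R) -> (forall i, (N <= i)%N -> f i = 0%R) ->
  \sum_(i <oo) (f i)%:E = (\sum_(i < N) f i)%:E.
Proof.
move=> f0 fN; rewrite (nneseries_split 0 N) => [|k _]; last by rewrite lee_fin.
rewrite eseries0 ?adde0 => [|i]; last by rewrite add0n => /fN ->.
by rewrite add0n sumEFin big_mkord.
Qed.

Lemma nneseries_mul (x y : nat -> R) :
  (forall i, (0 <= x i)%R) -> (forall i, (0 <= y i)%R) ->
  \sum_(i <oo) (y i)%:E \is a fin_num ->
  \sum_(i <oo) \sum_(j <oo) (x i * y j)%:E =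
  (\sum_(i <oo) (x i)%:E) * \sum_(j <oo) (y j)%:E.
Proof.
move=> x0 y0 yfin; set S := \sum_(j <oo) (y j)%:E.
transitivity (\sum_(i <oo) ((fine S)%:E * (x i)%:E)).
  apply: eq_eseriesr => i _; rewrite fineK // muleC -nneseriesZl => [|j _].
    by apply: eq_eseriesr => j _; rewrite EFinM.
  by rewrite lee_fin.
by rewrite nneseriesZl => [|i _]; rewrite ?lee_fin // fineK // muleC.
Qed.

Lemma acoefE (q : nat -> R) j : (forall k, (0 <= q k)%R) ->
  acoef q j = \sum_(K <oo) (acoef_weight R j K * q K)%:E.
Proof.
move=> q_ge0; rewrite /acoef ereal_series eseries_mkcond -nneseriesZl; last first.
  by move=> i _; case: ifP => // _; rewrite lee_fin mulr_ge0.
apply: eq_eseriesr => K _; case: ifP => jK.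
  by rewrite -EFinM /acoef_weight mulrAC mulrC.
by rewrite /acoef_weight bin_small ?ltnNge ?jK // !mul0r mule0.
Qed.

Variable q : nat -> R.
Hypothesis q_ge0 : forall k, (0 <= q k)%R.

Lemma acoef0 : acoef q 0 = \sum_(K <oo) (q K)%:E.
Proof. by rewrite acoefE //; apply: eq_eseriesr => K _; rewrite acoef_weight0 mul1r. Qed.

Lemma R1e_ge0 i : 0 <= R1e q i.
Proof.
apply: nneseries_ge0 => K _ _; apply: nneseries_ge0 => L _ _.
by rewrite lee_fin !mulr_ge0 ?R1coef_ge0.
Qed.

Lemma R1_ge0 i : (0 <= R1 q i)%R.
Proof. by rewrite /R1 fine_ge0 ?R1e_ge0. Qed.

Lemma weighted_series_R1e k :
  \sum_(i <oo) (acoef_weight R k i)%:E * R1e q i =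
  \sum_(K <oo) \sum_(L <oo) (k.+1%:R^-1 * \sum_(j < k.+1)
     (acoef_weight R j K * q K) * (acoef_weight R (k - j) L * q L))%:E.
Proof.
have term_ge0 i K L : (0 <= acoef_weight R k i * (R1coef R i K L * q K * q L))%R.
  by rewrite !mulr_ge0 ?acoef_weight_ge0 ?R1coef_ge0.
transitivity (\sum_(i <oo) \sum_(K <oo) \sum_(L <oo)
   (acoef_weight R k i * (R1coef R i K L * q K * q L))%:E).
  apply: eq_eseriesr => i _; rewrite /R1e -nneseriesZl => [|K _]; last first.
    by apply: nneseries_ge0 => L _ _; rewrite lee_fin !mulr_ge0 ?R1coef_ge0.
  apply: eq_eseriesr => K _; rewrite -nneseriesZl => [|L _]; last first.
    by rewrite lee_fin !mulr_ge0 ?R1coef_ge0.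
  by apply: eq_eseriesr => L _; rewrite EFinM.
rewrite nneseries_interchange => [|i K]; last first.
  by apply: nneseries_ge0 => L _ _; rewrite lee_fin.
apply: eq_eseriesr => K _.
rewrite nneseries_interchange => [|*]; last by rewrite lee_fin.
apply: eq_eseriesr => L _.
rewrite (@nneseries_finite_support _ (K + L + 1)) // => [|i iKL]; last first.
  by rewrite /R1coef ifN ?mul0r ?mulr0 //; lia.
congr EFin; transitivity (q K * q L * \sum_(i < K + L + 1)
    acoef_weight R k i * R1coef R i K L)%R.
  by rewrite mulr_sumr; apply: eq_bigr => i _; ring.
rewrite sum_acoef_weight_R1coef mulrCA mulr_sumr; congr (_ * _)%R.
by apply: eq_bigr => j _; ring.
Qed.

Hypothesis acoef_fin : forall j, acoef q j \is a fin_num.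

Lemma weighted_series_R1eE k :
  \sum_(i <oo) (acoef_weight R k i)%:E * R1e q i =
  (k.+1%:R^-1 * \sum_(j < k.+1) fine (acoef q j) * fine (acoef q (k - j)))%:E.
Proof.
have wq_ge0 j K : (0 <= acoef_weight R j K * q K)%R.
  by rewrite mulr_ge0 ?acoef_weight_ge0.
set c := (k.+1%:R^-1)%R.
rewrite weighted_series_R1e.
transitivity (c%:E * \sum_(K <oo) \sum_(L <oo) \sum_(j < k.+1)
   ((acoef_weight R j K * q K) * (acoef_weight R (k - j) L * q L))%:E).
  rewrite -nneseriesZl => [|K _]; last first.
    by apply: nneseries_ge0 => L _ _; apply: sume_ge0 => j _; rewrite lee_fin mulr_ge0.
  apply: eq_eseriesr => K _; rewrite -nneseriesZl => [|L _]; last first.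
    by apply: sume_ge0 => j _; rewrite lee_fin mulr_ge0.
  by apply: eq_eseriesr => L _; rewrite EFinM sumEFin.
rewrite EFinM -sumEFin; congr (_ * _).
transitivity (\sum_(j < k.+1) \sum_(K <oo) \sum_(L <oo)
   ((acoef_weight R j K * q K) * (acoef_weight R (k - j) L * q L))%:E).
  rewrite -nneseries_sum => [|j K _]; last first.
    by apply: nneseries_ge0 => L _ _; rewrite lee_fin mulr_ge0.
  apply: eq_eseriesr => K _; rewrite nneseries_sum // => j L _.
  by rewrite lee_fin mulr_ge0.
apply: eq_bigr => j _.
by rewrite nneseries_mul // -?acoefE // EFinM !fineK.
Qed.

Lemma R1e_fin_num i : R1e q i \is a fin_num.
Proof.
rewrite ge0_fin_numE ?R1e_ge0 //.
apply: (@le_lt_trans _ _ (\sum_(i <oo) R1e q i)).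
  rewrite (@nneseriesD1 _ _ i xpredT) // => [|*]; last exact: R1e_ge0.
  by rewrite leeDl // nneseries_ge0 // => *; exact: R1e_ge0.
(* with weight 0, the identity reads sum_i R_1(q)_i = a_0(q)^2 *)
have := weighted_series_R1eE 0.
under eq_eseriesr do rewrite acoef_weight0 mul1e.
by move=> ->; rewrite ltry.
Qed.

Lemma acoef_R1 k :
  acoef (R1 q) k =
  (k.+1%:R^-1 * \sum_(j < k.+1) fine (acoef q j) * fine (acoef q (k - j)))%:E.
Proof.
rewrite acoefE => [|i]; last exact: R1_ge0.
rewrite -weighted_series_R1eE; apply: eq_eseriesr => i _.
by rewrite EFinM /R1 fineK ?R1e_fin_num.
Qed.

End Series.

Local Open Scope classical_set_scope.

Section Limits.
Variable R : realType.

Lemma cvg_affine_contraction (x c : nat -> R) (r l : R) : 0 <= r < 1 ->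
  (forall t, x t.+1 = r * x t + c t) -> c @ \oo --> (1 - r) * l ->
  x @ \oo --> l.
Proof.
move=> /andP[r_ge0 r_lt1] x_rec c_cvg; apply/cvgrPdist_le => e e_gt0.
have e2_gt0 : 0 < e * (1 - r) / 2 by rewrite divr_gt0 // mulr_gt0 // subr_gt0.
move/cvgrPdist_le: c_cvg => /(_ _ e2_gt0) [T _ c_near].
set E := `|l - x T|.
have E_ge0 : 0 <= E := normr_ge0 _.
have dist_le m : `|l - x (T + m)%N| <= e / 2 + r ^+ m * E.
  elim: m => [|m IH]; first by rewrite addn0 expr0 mul1r -/E; lra.
  rewrite addnS x_rec.
  have -> : l - (r * x (T + m)%N + c (T + m)%N) =
     r * (l - x (T + m)%N) + ((1 - r) * l - c (T + m)%N) by ring.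
  apply: le_trans (ler_normD _ _) _.
  rewrite normrM (ger0_norm r_ge0).
  have := c_near (T + m)%N (leq_addr _ _).
  have : r * `|l - x (T + m)%N| <= r * (e / 2 + r ^+ m * E) by rewrite ler_wpM2l.
  rewrite exprS; nra.
have e3_gt0 : 0 < e / 2 / (E + 1) by rewrite !divr_gt0 // ltr_wpDl.
have r_norm : `|r| < 1 by rewrite ger0_norm.
move/cvgrPdist_le: (cvg_expr r_norm) => /(_ _ e3_gt0) [N _ rN_small].
exists (T + N)%N => // t /= tTN.
have -> : t = (T + (t - T))%N by lia.
apply: le_trans (dist_le _) _.
have := rN_small (t - T)%N ltac:(rewrite /=; lia).
rewrite sub0r normrN ger0_norm ?exprn_ge0 // => rtT_small.
have : r ^+ (t - T) * E <= e / 2 / (E + 1) * E by rewrite ler_wpM2r.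
have -> : e / 2 / (E + 1) * E = e / 2 - e / 2 / (E + 1).
  by field; rewrite gt_eqF // ltr_wpDl.
lra.
Qed.

Lemma cvg_convolution_recursion (b : nat -> nat -> R) : b 0%N 0%N = 1 ->
  (forall t k, b t.+1 k = k.+1%:R^-1 * \sum_(j < k.+1) b t j * b t (k - j)%N) ->
  forall k, (fun t => b t k) @ \oo --> b 0%N 1%N ^+ k.
Proof.
move=> b00 b_rec; set a := b 0%N 1%N.
have b0 t : b t 0%N = 1.
  by elim: t => [//|t IH]; rewrite b_rec big_ord1 IH invr1 !mul1r.
have b1 t : b t 1%N = a.
  elim: t => [//|t IH].
  by rewrite b_rec !big_ord_recr big_ord0 /= b0 IH; field.
elim/ltn_ind => -[|[|k]] IH.
- by under eq_fun do rewrite b0; rewrite expr0; exact: cvg_cst.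
- by under eq_fun do rewrite b1; rewrite expr1; exact: cvg_cst.
pose c t := k.+3%:R^-1 * \sum_(j < k.+1) b t j.+1 * b t (k.+1 - j)%N.
apply: (@cvg_affine_contraction _ c (2 / k.+3%:R)).
- by rewrite divr_ge0 //= ltr_pdivrMr // mul1r ltr_nat.
- move=> t; rewrite b_rec big_ord_recl big_ord_recr /=.
  under eq_bigr do rewrite /bump /= subSS.
  by rewrite subSS subnn subn0 !b0 /c; field.
have -> : (1 - 2 / k.+3%:R) * a ^+ k.+2 =
    k.+3%:R^-1 * \sum_(j < k.+1) a ^+ j.+1 * a ^+ (k.+1 - j)%N.
  rewrite (eq_bigr (fun _ => a ^+ k.+2)) => [|j _]; last first.
    by rewrite -exprD; congr (_ ^+ _); have := ltn_ord j; lia.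
  by rewrite sumr_const card_ord -mulr_natl; field; rewrite gt_eqF // ltr_wpDr.
apply: cvgMl_tmp; apply: cvg_big => [|j _]; first exact: add_continuous.
by apply: cvgM; apply: IH; have := ltn_ord j; lia.
Qed.

End Limits.

Theorem proposition11 (R : realType) (p : nat -> nat -> R)
  (hp0 : is_prob (p 0%N))
  (hfin : forall k : nat, acoef (p 0%N) k \is a fin_num)
  (hrec : forall t : nat, p t.+1 = R1 (p t)) :
  forall k : nat,
    (fun t : nat => acoef (p t) k) @ \oo --> ((fine (acoef (p 0%N) 1%N)) ^+ k)%:E.
Proof.
have [p0_ge0 p0_sum1] := hp0.
have p_ge0 t k : 0 <= p t k.
  by elim: t k => [|t IH] k; rewrite ?hrec; [exact: p0_ge0 | exact: R1_ge0].
have acoef_p_fin t k : acoef (p t) k \is a fin_num.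
  by elim: t k => [|t IH] k; rewrite ?hrec ?acoef_R1.
pose b t k := fine (acoef (p t) k).
have b00 : b 0%N 0%N = 1 by rewrite /b acoef0 // p0_sum1.
have b_rec t k : b t.+1 k = k.+1%:R^-1 * \sum_(j < k.+1) b t j * b t (k - j)%N.
  by rewrite /b hrec acoef_R1.
move=> k; have -> : (fun t => acoef (p t) k) = (fun t => (b t k)%:E).
  by apply/funext => t; rewrite /b fineK.
apply: cvg_EFin; first exact: nearW.
exact: cvg_convolution_recursion.
Qed.
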